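(* For integers $k\ge2$, let $F_k$ be the non-abelian free group of rank $k$. Then the true prosoluble completions $P\mathcal{S}(F_k)$, $k\ge 2$, are pairwise non-isomorphic (as topological groups).
   Context: For a group $\Gamma$, the true prosoluble completion $P\mathcal{S}(\Gamma)$ is the completion of $\Gamma/\bigcap N$ for the topology whose basis of neighbourhoods of the identity consists of the images of the normal subgroups $N$ of $\Gamma$ with $\Gamma/N$ soluble; equivalently it is the inverse limit $\varprojlim\Gamma/N$ over such $N$, with the inverse limit topology. *)

From Stdlib Require List.
From mathcomp Require Import all_boot.
Set Implicit Arguments. Unset Strict Implicit. Unset Printing Implicit Defensive.

Record grp := Grp {
  gcar : Type;
  gset : gcar -> Prop;
  gmul : gcar -> gcar -> gcar;
  ginv : gcar -> gcar;
  gone : gcar }.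

Definition subset_of {T : Type} (A B : T -> Prop) := forall x, A x -> B x.

Section GroupNotions.
Variable G : grp.
Local Notation T := (@gcar G).
Local Notation S := (@gset G).
Local Notation mul := (@gmul G).
Local Notation inv := (@ginv G).

Definition is_subgroup (H : T -> Prop) :=
  subset_of H S /\ H (@gone G) /\
  (forall a b, H a -> H b -> H (mul a b)) /\ (forall a, H a -> H (inv a)).

Definition is_normal (N : T -> Prop) :=
  is_subgroup N /\ forall g n, S g -> N n -> N (mul (mul (inv g) n) g).

Definition gen (A : T -> Prop) : T -> Prop :=
  fun x => forall H, is_subgroup H -> subset_of A H -> H x.

Definition commg (a b : T) := mul (mul (inv a) (inv b)) (mul a b).

Definition derived_sub (H : T -> Prop) : T -> Prop :=
  gen (fun x => exists a b, H a /\ H b /\ x = commg a b).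

Definition derived (n : nat) : T -> Prop := iter n derived_sub S.

(* N normal with G/N soluble: the n-th derived subgroup of G/N, which is the
   image of G^(n), is trivial for some n, i.e. G^(n) <= N. *)
Definition soluble_quotient (N : T -> Prop) :=
  is_normal N /\ exists n, subset_of (derived n) N.

Definition lcoset (g : T) (N : T -> Prop) : T -> Prop :=
  fun x => exists n, N n /\ x = mul g n.

(* Elements of the inverse limit  lim_{N} G/N  (N ranging over the normal
   subgroups with soluble quotient), encoded as families x : N |-> x N of
   cosets; outside the index set the family is the empty set (normalisation). *)
Definition PS_carrier (x : (T -> Prop) -> (T -> Prop)) :=
  (forall N, soluble_quotient N -> exists g, S g /\ x N = lcoset g N) /\
  (forall N, ~ soluble_quotient N -> x N = (fun _ => False)) /\
  (forall M N, soluble_quotient M -> soluble_quotient N ->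
     subset_of M N -> subset_of (x M) (x N)).

Definition PS_mul (x y : (T -> Prop) -> (T -> Prop)) : (T -> Prop) -> (T -> Prop) :=
  fun N z => exists a b, x N a /\ y N b /\ z = mul a b.

Definition agree_on (L : list (T -> Prop)) (x y : (T -> Prop) -> (T -> Prop)) :=
  forall N, List.In N L -> x N = y N.

End GroupNotions.

Definition PSel (G : grp) := (gcar G -> Prop) -> (gcar G -> Prop).

(* Continuity of f : PS(G) -> PS(H) for the inverse limit topologies (subspace
   of the product of the discrete quotients): the preimage of every subbasic
   open set {y | y N = f x N} contains a basic open neighbourhood of x. *)
Definition PS_continuous (G H : grp) (f : PSel G -> PSel H) :=
  forall x, PS_carrier x -> forall N, soluble_quotient N ->
    exists L : list (gcar G -> Prop),
      (forall M, List.In M L -> soluble_quotient M) /\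
      forall y, PS_carrier y -> agree_on L x y -> f y N = f x N.

Definition PS_isomorphic (G H : grp) :=
  exists (f : PSel G -> PSel H) (g : PSel H -> PSel G),
    (forall x, PS_carrier x -> PS_carrier (f x)) /\
    (forall y, PS_carrier y -> PS_carrier (g y)) /\
    (forall x, PS_carrier x -> g (f x) = x) /\
    (forall y, PS_carrier y -> f (g y) = y) /\
    (forall x y, PS_carrier x -> PS_carrier y -> f (PS_mul x y) = PS_mul (f x) (f y)) /\
    PS_continuous f /\ PS_continuous g.

(* The free group of rank k: reduced words in the letters x_i^{+-1}
   (letter (i, true) = x_i, (i, false) = x_i^-1), product = free reduction of
   the concatenation. *)
Definition letter (k : nat) := ('I_k * bool)%type.

Definition cancels {k} (a b : letter k) := (a.1 == b.1) && (a.2 != b.2).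

Fixpoint reducedb {k} (w : seq (letter k)) : bool :=
  match w with
  | a :: ((b :: _) as t) => ~~ cancels a b && reducedb t
  | _ => true
  end.

Definition reduce {k} (w : seq (letter k)) : seq (letter k) :=
  foldr (fun a acc => match acc with
                      | b :: t => if cancels a b then t else a :: acc
                      | [::] => [:: a] end) [::] w.

Definition free_group (k : nat) : grp :=
  @Grp (seq (letter k)) (fun w => reducedb w)
       (fun u v => reduce (u ++ v))
       (fun u => rev (map (fun a => (a.1, ~~ a.2)) u))
       [::].

(* A continuous isomorphism PS(F_k) ~ PS(F_l) turns each of the 2^l continuous
   homomorphisms PS(F_l) -> Z/2 into a continuous homomorphism PS(F_k) -> Z/2,
   injectively.  Such a homomorphism is determined by its restriction to the
   dense image of F_k, and that restriction, a homomorphism F_k -> Z/2, by its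
   values on the k free generators; hence 2^l <= 2^k and, by symmetry, k = l.
   The 2^l homomorphisms on PS(F_l) extend the parity characters of F_l
   (exponent sum mod 2 over a set of generators), whose kernels have abelian,
   hence soluble, quotients. *)

From Pilot Require Import Defs.
From Stdlib Require List.
From Stdlib Require Import ClassicalEpsilon FunctionalExtensionality PropExtensionality.
From mathcomp Require Import all_boot.
Set Implicit Arguments. Unset Strict Implicit. Unset Printing Implicit Defensive.

Lemma pred_ext (T : Type) (A B : T -> Prop) : (forall z, A z <-> B z) -> A = B.
Proof.
by move=> AB; apply: functional_extensionality => z; apply: propositional_extensionality.
Qed.

Section GroupLaws.
Variable G : grp.
Local Notation S := (@gset G).
Local Notation mul := (@gmul G).
Local Notation inv := (@ginv G).
Local Notation one := (@gone G).

Record group_laws : Prop := GroupLaws {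
  gone_in : S one;
  gmul_in : forall a b, S a -> S b -> S (mul a b);
  ginv_in : forall a, S a -> S (inv a);
  gmulA : forall a b c, S a -> S b -> S c -> mul (mul a b) c = mul a (mul b c);
  gmul1g : forall a, S a -> mul one a = a;
  gmulg1 : forall a, S a -> mul a one = a;
  gmulVg : forall a, S a -> mul (inv a) a = one;
  gmulgV : forall a, S a -> mul a (inv a) = one }.

End GroupLaws.

Section FreeReduction.
Variable k : nat.
Local Notation word := (seq (letter k)).

Definition flip_letter (a : letter k) : letter k := (a.1, ~~ a.2).

Definition word_inv (w : word) : word := rev (map flip_letter w).

Definition push_letter (a : letter k) (w : word) : word :=
  if w is b :: t then (if cancels a b then t else a :: w) else [:: a].

Definition reduce_onto (t w : word) : word := foldr push_letter t w.

Lemma flip_letterK : involutive flip_letter.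
Proof. by case=> i []. Qed.

Lemma cancels_flip (a : letter k) : cancels a (flip_letter a).
Proof. by rewrite /cancels /= eqxx; case: a.2. Qed.

Lemma cancelsP (a b : letter k) : cancels a b -> b = flip_letter a.
Proof.
case: a b => [i s] [j t]; rewrite /cancels /flip_letter /=.
by case/andP => /eqP ->; case: s; case: t.
Qed.

Lemma reducedb_sorted (w : word) : reducedb w = sorted (fun a b => ~~ cancels a b) w.
Proof.
case: w => // a w; elim: w a => // b t IH a.
by rewrite -[reducedb _]/(~~ cancels a b && reducedb (b :: t)) IH.
Qed.

Lemma reducedb_behead (a : letter k) w : reducedb (a :: w) -> reducedb w.
Proof. by case: w => //= b t /andP[]. Qed.

Lemma reducedb_push a (w : word) : reducedb w -> reducedb (push_letter a w).
Proof.
case: w => [|b t] //= Hw; case: ifP => cab /=; first exact: reducedb_behead Hw.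
by rewrite cab.
Qed.

Lemma reducedb_reduce_onto t (w : word) : reducedb t -> reducedb (reduce_onto t w).
Proof. by move=> Ht; elim: w => //= a w IH; apply: reducedb_push. Qed.

Lemma reducedb_reduce (w : word) : reducedb (reduce w).
Proof. exact: reducedb_reduce_onto. Qed.

Lemma reduce_id (w : word) : reducedb w -> reduce w = w.
Proof.
elim: w => // a w IH Hw; rewrite /= -/(reduce w) IH; last exact: reducedb_behead Hw.
by case: w {IH} Hw => [|b t] //= /andP[/negbTE ->].
Qed.

Lemma reduce_onto_push t a (w : word) : reducedb t ->
  reduce_onto t (push_letter a w) = push_letter a (reduce_onto t w).
Proof.
move=> Ht; case: w => [|b w] //=; case: ifP => cab //=.
have := reducedb_reduce_onto w Ht; case: (reduce_onto t w) => [|c r] /=.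
  by rewrite cab.
move=> Hr; case: ifP => cbc; last by rewrite /= cab.
have eca : c = a by rewrite (cancelsP cbc) (cancelsP cab) flip_letterK.
by rewrite eca in Hr *; case: r Hr => [|d r] //= /andP[/negbTE ->].
Qed.

Lemma reduce_onto_reduce t (w : word) :
  reducedb t -> reduce_onto t (reduce w) = reduce_onto t w.
Proof. by move=> Ht; elim: w => //= a w IH; rewrite reduce_onto_push // IH. Qed.

Lemma reduce_cat (u w : word) : reduce (u ++ w) = reduce_onto (reduce w) u.
Proof. exact: foldr_cat. Qed.

Lemma reduceA (u v w : word) :
  reduce (reduce (u ++ v) ++ w) = reduce (u ++ reduce (v ++ w)).
Proof.
rewrite [RHS]reduce_cat (reduce_id (reducedb_reduce _)) reduce_cat.
by rewrite reduce_onto_reduce ?reducedb_reduce // /reduce_onto foldr_cat reduce_cat.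
Qed.

Lemma reduce_cat_inv (w : word) : reduce (w ++ word_inv w) = [::].
Proof.
elim: w => // a w IH.
rewrite /word_inv map_cons rev_cons -cats1 -/(word_inv w) cat_cons catA /=.
rewrite -/(reduce _) reduce_cat -reduce_onto_reduce // IH /=.
by rewrite cancels_flip.
Qed.

Lemma word_invK : involutive word_inv.
Proof.
by move=> w; rewrite /word_inv map_rev revK -map_comp (eq_map flip_letterK) map_id.
Qed.

Lemma reduce_inv_cat (w : word) : reduce (word_inv w ++ w) = [::].
Proof. by rewrite -{2}(word_invK w) reduce_cat_inv. Qed.

Lemma reducedb_word_inv (w : word) : reducedb w -> reducedb (word_inv w).
Proof.
rewrite !reducedb_sorted /word_inv rev_sorted sorted_map.
apply: sub_sorted => -[i s] [j t]; rewrite /relpre /cancels /flip_letter /= eq_sym.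
by case: s; case: t.
Qed.

Lemma free_group_laws : group_laws (free_group k).
Proof.
split => //=.
- by move=> *; apply: reducedb_reduce.
- exact: reducedb_word_inv.
- by move=> *; apply: reduceA.
- exact: reduce_id.
- by move=> w; rewrite cats0; apply: reduce_id.
- by move=> w _; apply: reduce_inv_cat.
- by move=> w _; apply: reduce_cat_inv.
Qed.

End FreeReduction.

Section SubgroupsAndCosets.
Variable G : grp.
Hypothesis GL : group_laws G.
Local Notation T := (gcar G).
Local Notation S := (@gset G).
Local Notation mul := (@gmul G).
Local Notation inv := (@ginv G).
Local Notation one := (@gone G).

Let S_one := gone_in GL.
Let S_mul := gmul_in GL.
Let S_inv := ginv_in GL.
#[local] Hint Resolve S_one S_mul S_inv : core.

Lemma gset_subgroup : is_subgroup S.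
Proof. by do !split; auto. Qed.

Lemma gen_min (A H : T -> Prop) : is_subgroup H -> subset_of A H -> subset_of (gen A) H.
Proof. by move=> sgH sAH x; apply. Qed.

Lemma gen_subgroup (A : T -> Prop) : subset_of A S -> is_subgroup (gen A).
Proof.
move=> sAS; split; first exact: gen_min gset_subgroup sAS.
split; first by move=> H [_ []].
split=> [a b Ha Hb | a Ha] H sgH sAH; have [_ [_ [mulH invH]]] := sgH.
  by apply: (mulH); [apply: Ha | apply: Hb].
by apply: (invH); apply: Ha.
Qed.

Lemma derived_sub_subset (H : T -> Prop) : is_subgroup H -> subset_of (derived_sub H) H.
Proof.
move=> sgH; have [_ [_ [mulH invH]]] := sgH.
apply: gen_min => // _ [a [b [Ha [Hb ->]]]].
by apply: (mulH); apply: (mulH) => //; apply: (invH).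
Qed.

Lemma derived_subgroup n : is_subgroup (@derived G n).
Proof.
elim: n => [|n IHn]; first exact: gset_subgroup.
apply: gen_subgroup => _ [a [b [Ha [Hb ->]]]].
have [sS _] := IHn.
by have [Sa Sb] := (sS a Ha, sS b Hb); rewrite /Defs.commg; auto.
Qed.

Lemma derived_decr m n : m <= n -> subset_of (@derived G n) (@derived G m).
Proof.
move=> /subnK <-; elim: (n - m) => [|d IHd] // x Hx.
by apply: IHd; apply: derived_sub_subset (derived_subgroup _) _ Hx.
Qed.

Lemma soluble_quotient_bigcap (Ns : seq (T -> Prop)) :
    (forall N, List.In N Ns -> soluble_quotient N) ->
  soluble_quotient (fun z => S z /\ forall N, List.In N Ns -> N z).
Proof.
move=> solNs.
have [m derNs] : exists m, forall N, List.In N Ns -> subset_of (@derived G m) N.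
  elim: Ns solNs => [|N Ns IHNs] solNs; first by exists 0.
  have [_ [n derN]] := solNs N (or_introl erefl).
  have [m derNs] := IHNs (fun M NsM => solNs M (or_intror NsM)).
  exists (maxn n m) => M [<- | NsM] x Hx.
    by apply: derN; apply: derived_decr (leq_maxl n m) _ Hx.
  by apply: derNs NsM _ _; apply: derived_decr (leq_maxr n m) _ Hx.
have normNs N : List.In N Ns -> is_normal N by case/solNs.
split; last first.
  exists m => z Hz; split; last by move=> N /derNs; apply.
  by have [sS _] := derived_subgroup m; apply: sS.
split; last first.
  move=> g n Sg [Sn Nn]; split; first by auto.
  by move=> N NsN; have [_ conjN] := normNs N NsN; apply: conjN => //; apply: Nn.
split; first by move=> z [].
split; first by split=> [|N /normNs [[_ []]]].
split=> [a b [Sa Na] [Sb Nb] | a [Sa Na]].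
  split=> [|N NsN]; first by auto.
  by have [[_ [_ [mulN _]]] _] := normNs N NsN; apply: (mulN); [apply: Na | apply: Nb].
split=> [|N NsN]; first by auto.
by have [[_ [_ [_ invN]]] _] := normNs N NsN; apply: (invN); apply: Na.
Qed.

Lemma gmulKg a b : S a -> S b -> mul a (mul (inv a) b) = b.
Proof. by move=> Sa Sb; rewrite -gmulA ?gmulgV ?gmul1g; auto. Qed.

Lemma lcoset_refl (N : T -> Prop) g : is_subgroup N -> S g -> lcoset g N g.
Proof. by move=> [_ [N1 _]] Sg; exists one; rewrite gmulg1. Qed.

Lemma lcoset_eq (N : T -> Prop) g h : is_subgroup N -> S h -> lcoset h N g ->
  lcoset h N = lcoset g N.
Proof.
move=> [sNS [_ [mulN invN]]] Sh [n [Nn ->]]; have Sn := sNS n Nn.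
apply: pred_ext => z; split=> [[m [Nm ->]] | [m [Nm ->]]]; have Sm := sNS m Nm.
  exists (mul (inv n) m); split; first by apply: mulN => //; apply: invN.
  by rewrite gmulA ?gmulKg; auto.
by exists (mul n m); split; [apply: mulN | rewrite gmulA; auto].
Qed.

Lemma lcoset_mul (N : T -> Prop) a b : is_normal N -> S a -> S b ->
  (fun z => exists x y, lcoset a N x /\ lcoset b N y /\ z = mul x y) =
  lcoset (mul a b) N.
Proof.
move=> [[sNS [N1 [mulN invN]]] conjN] Sa Sb.
apply: pred_ext => z; split.
  move=> [_ [_ [[n [Nn ->]] [[m [Nm ->]] ->]]]]; have [Sn Sm] := (sNS n Nn, sNS m Nm).
  exists (mul (mul (mul (inv b) n) b) m).
  split; first by apply: mulN => //; apply: conjN.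
  by rewrite !gmulA ?gmulKg; auto.
move=> [n [Nn ->]]; exists a, (mul b n); split; first exact: lcoset_refl.
by split; [exists n | rewrite gmulA; auto].
Qed.

End SubgroupsAndCosets.

Section ProsolubleCompletion.
Variable G : grp.
Hypothesis GL : group_laws G.
Local Notation T := (gcar G).
Local Notation S := (@gset G).
Local Notation mul := (@gmul G).

Definition PS_embed (g : T) : PSel G := fun N z => soluble_quotient N /\ lcoset g N z.

Lemma PS_embedE g N : soluble_quotient N -> PS_embed g N = lcoset g N.
Proof. by move=> solN; apply: pred_ext => z; split=> [[]|]. Qed.

Lemma PS_embed_carrier g : S g -> PS_carrier (PS_embed g).
Proof.
move=> Sg; split; first by move=> N solN; exists g; rewrite PS_embedE.
split; first by move=> N nsolN; apply: pred_ext => z; split=> [[]|].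
move=> M N solM solN sMN _ [_ [m [Mm ->]]].
by split=> //; exists m; split; first exact: sMN.
Qed.

Lemma PS_coord_nonempty (x : PSel G) N : PS_carrier x -> soluble_quotient N ->
  exists a, S a /\ x N a.
Proof.
move=> [xcos _] solN; have [a [Sa ->]] := xcos N solN.
by exists a; split=> //; apply: lcoset_refl; case: solN => [[]].
Qed.

Lemma PS_embed_mul g h : S g -> S h ->
  PS_embed (mul g h) = PS_mul (PS_embed g) (PS_embed h).
Proof.
move=> Sg Sh; apply: functional_extensionality => N; apply: pred_ext => z.
split=> [[solN] | [x [y [[solN gNx] [[_ hNy] ->]]]]].
  have normN : is_normal N by case: solN.
  by rewrite /PS_mul !PS_embedE // -lcoset_mul.
split=> //; rewrite -lcoset_mul //; [by exists x, y | by case: solN].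
Qed.

Lemma PS_mul_carrier (x y : PSel G) :
  PS_carrier x -> PS_carrier y -> PS_carrier (PS_mul x y).
Proof.
move=> [xcos [xnil xmono]] [ycos [ynil ymono]]; split.
  move=> N solN; have [a [Sa xN]] := xcos N solN; have [b [Sb yN]] := ycos N solN.
  exists (mul a b); split; first exact: gmul_in.
  by rewrite /PS_mul xN yN lcoset_mul //; case: solN.
split.
  move=> N nsolN; apply: pred_ext => z.
  by split=> // [[a [b [xNa _]]]]; rewrite xnil in xNa.
move=> M N solM solN sMN _ [a [b [xMa [yMb ->]]]].
by exists a, b; split; [apply: xmono xMa | split; first apply: ymono yMb].
Qed.

Lemma PS_embed_dense (x : PSel G) (Ns : seq (T -> Prop)) : PS_carrier x ->
    (forall N, List.In N Ns -> soluble_quotient N) ->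
  exists g, S g /\ agree_on Ns x (PS_embed g).
Proof.
move=> xPS solNs; have [xcos [_ xmono]] := xPS.
have solM := soluble_quotient_bigcap GL solNs.
have [g [Sg xM]] := xcos _ solM.
exists g; split=> // N NsN; have solN := solNs N NsN.
have [h [Sh xN]] := xcos N solN.
have xNg : x N g.
  apply: (xmono _ _ solM solN); first by move=> z [_]; apply.
  by rewrite xM; apply: lcoset_refl; case: solM => [[]].
by rewrite PS_embedE // xN; apply: lcoset_eq => //; [case: solN => [[]] | rewrite -xN].
Qed.

End ProsolubleCompletion.

Lemma PS_continuous_agree (G H : grp) (f : PSel G -> PSel H) (x : PSel G)
    (Ns : seq (gcar H -> Prop)) :
    PS_continuous f -> PS_carrier x -> (forall N, List.In N Ns -> soluble_quotient N) ->
  exists L : seq (gcar G -> Prop), (forall M, List.In M L -> soluble_quotient M) /\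
    forall y, PS_carrier y -> agree_on L x y -> agree_on Ns (f x) (f y).
Proof.
move=> fcont xPS; elim: Ns => [|N Ns IHNs] solNs.
  by exists [::]; split=> // y _ _ N [].
have [L1 [solL1 agree1]] := fcont x xPS N (solNs N (or_introl erefl)).
have [L2 [solL2 agree2]] := IHNs (fun M NsM => solNs M (or_intror NsM)).
exists (L1 ++ L2); split.
  by move=> M /(List.in_app_or L1 L2 M) [/solL1 | /solL2].
move=> y yPS xy M [<- | NsM].
  by rewrite (agree1 y) // => K L1K; apply: xy; apply: List.in_or_app; left.
by apply: agree2 => // K L2K; apply: xy; apply: List.in_or_app; right.
Qed.

Lemma PS_continuous_approx (G H : grp) (f : PSel G -> PSel H) (x : PSel G)
    (Ns : seq (gcar H -> Prop)) : group_laws G ->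
    PS_continuous f -> PS_carrier x -> (forall N, List.In N Ns -> soluble_quotient N) ->
  exists g, gset g /\ agree_on Ns (f x) (f (PS_embed g)).
Proof.
move=> GL fcont xPS solNs.
have [L [solL agreeL]] := PS_continuous_agree fcont xPS solNs.
have [g [Sg xg]] := PS_embed_dense GL xPS solL.
by exists g; split=> //; apply: agreeL => //; apply: PS_embed_carrier.
Qed.

Lemma PS_isomorphic_sym (G H : grp) : group_laws G ->
  PS_isomorphic G H -> PS_isomorphic H G.
Proof.
move=> GL [f [g [fPS [gPS [gf [fg [fmul [fcont gcont]]]]]]]].
exists g, f; do 4!split=> //; split=> // x y xPS yPS.
have gxy := PS_mul_carrier GL (gPS x xPS) (gPS y yPS).
by rewrite -[in LHS](fg x) // -[in LHS](fg y) // -fmul ?gf //; apply: gPS.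
Qed.

Section QuadraticCharacters.
Variable G : grp.
Hypothesis GL : group_laws G.
Local Notation T := (gcar G).
Local Notation S := (@gset G).
Local Notation mul := (@gmul G).
Local Notation inv := (@ginv G).
Local Notation one := (@gone G).
Let S_one := gone_in GL.
Let S_mul := gmul_in GL.
Let S_inv := ginv_in GL.
#[local] Hint Resolve S_one S_mul S_inv : core.

Variable chi : T -> bool.
Hypothesis chiM : forall a b, S a -> S b -> chi (mul a b) = chi a (+) chi b.

Lemma char1 : chi one = false.
Proof. by have := chiM S_one S_one; rewrite gmul1g // addbb. Qed.

Lemma charV a : S a -> chi (inv a) = chi a.
Proof.
move=> Sa; have := chiM (S_inv Sa) Sa.
by rewrite gmulVg // char1; case: (chi (inv a)) (chi a) => -[].
Qed.

Definition char_kernel : T -> Prop := fun w => S w /\ chi w = false.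

Lemma char_kernel_subgroup : is_subgroup char_kernel.
Proof.
split; first by move=> w [].
split; first by split; [|apply: char1].
split=> [a b [Sa ka] [Sb kb] | a [Sa ka]]; split; auto.
  by rewrite chiM // ka kb.
by rewrite charV.
Qed.

Lemma char_kernel_soluble : soluble_quotient char_kernel.
Proof.
split.
  split; first exact: char_kernel_subgroup.
  move=> g n Sg [Sn kn]; split; first by auto.
  by rewrite !chiM; auto; rewrite charV // kn addbF addbb.
exists 1; apply: gen_min; first exact: char_kernel_subgroup.
move=> _ [a [b [Sa [Sb ->]]]]; rewrite /Defs.commg; split; first by auto.
by rewrite !chiM; auto; rewrite !charV // addbb.
Qed.

(* On a point of the completion, the coordinate at the kernel of chi is a coset
   on which chi is constant; PS_char returns that constant. *)
Definition PS_char (x : PSel G) : bool :=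
  if excluded_middle_informative (exists w, x char_kernel w /\ chi w) then true else false.

Lemma PS_charE (x : PSel G) a : PS_carrier x -> x char_kernel a -> PS_char x = chi a.
Proof.
move=> [xcos _] xa; have [c [Sc xc]] := xcos _ char_kernel_soluble.
have chi_coset w : x char_kernel w -> chi w = chi c.
  by rewrite xc => -[n [[Sn kn] ->]]; rewrite chiM // kn addbF.
rewrite /PS_char; case: excluded_middle_informative => [[w [xw chiw]] | nochi].
  by rewrite (chi_coset a xa) -(chi_coset w xw).
by case: (boolP (chi a)) => // chia; case: nochi; exists a.
Qed.

Lemma PS_char_mul (x y : PSel G) : PS_carrier x -> PS_carrier y ->
  PS_char (PS_mul x y) = PS_char x (+) PS_char y.
Proof.
move=> xPS yPS.
have [a [Sa xa]] := PS_coord_nonempty GL xPS char_kernel_soluble.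
have [b [Sb yb]] := PS_coord_nonempty GL yPS char_kernel_soluble.
rewrite (PS_charE (a := mul a b)) ?(PS_charE xPS xa) ?(PS_charE yPS yb) ?chiM //.
  exact: PS_mul_carrier.
by exists a, b.
Qed.

Lemma PS_char_embed g : S g -> PS_char (PS_embed g) = chi g.
Proof.
move=> Sg; apply: PS_charE; first exact: PS_embed_carrier.
have solK := char_kernel_soluble; have [[sgK _] _] := solK.
by rewrite PS_embedE //; apply: lcoset_refl.
Qed.

End QuadraticCharacters.

Section FreeGroupParity.
Variable k : nat.
Local Notation word := (seq (letter k)).

Definition parity (v : 'I_k -> bool) (w : word) : bool := odd (count (fun a => v a.1) w).

Lemma parity_cons v a w : parity v (a :: w) = v a.1 (+) parity v w.
Proof. by rewrite /parity /= oddD oddb. Qed.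

Lemma parity_push v a w : parity v (push_letter a w) = v a.1 (+) parity v w.
Proof.
case: w => [|b w] /=; first by rewrite parity_cons.
case: ifP => cab; last by rewrite parity_cons.
by rewrite parity_cons (cancelsP cab) addbA addbb.
Qed.

Lemma parity_mul v u w : parity v (reduce (u ++ w)) = parity v u (+) parity v w.
Proof.
elim: u => [|a u IHu] /=; last by rewrite parity_push IHu parity_cons addbA.
by elim: w => //= a w IHw; rewrite parity_push IHw parity_cons.
Qed.

Lemma free_parityM v (a b : word) : @gset (free_group k) a -> @gset (free_group k) b ->
  parity v (@gmul (free_group k) a b) = parity v a (+) parity v b.
Proof. by move=> _ _; apply: parity_mul. Qed.

Lemma free_char_parity (chi : word -> bool) :
    (forall u w, reducedb u -> reducedb w -> chi (reduce (u ++ w)) = chi u (+) chi w) ->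
  forall w, reducedb w -> chi w = parity [ffun i => chi [:: (i, true)]] w.
Proof.
move=> chiM; have chi1 := @char1 (free_group k) (free_group_laws k) chi chiM.
have chi_letter a : chi [:: a] = chi [:: (a.1, true)].
  case: a => i [] //.
  exact: (@charV (free_group k) (free_group_laws k) chi chiM [:: (i, true)]).
elim=> [|a w IHw] reduced_aw; first exact: chi1.
have reduced_w := reducedb_behead reduced_aw.
rewrite -{1}(reduce_id reduced_aw) -[reduce _]/(reduce ([:: a] ++ w)) chiM // IHw //.
by rewrite chi_letter parity_cons ffunE.
Qed.

End FreeGroupParity.

Section RankBound.
Variables k l : nat.
Local Notation Fk := (free_group k).
Local Notation Fl := (free_group l).
Local Notation char_l v := (@PS_char Fl (parity v)).
Local Notation kernel_l v := (@char_kernel Fl (parity v)).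
Local Notation embed_k := (@PS_embed Fk).
Variable f : PSel Fk -> PSel Fl.
Variable g : PSel Fl -> PSel Fk.
Hypothesis fPS : forall x, PS_carrier x -> PS_carrier (f x).
Hypothesis gPS : forall y, PS_carrier y -> PS_carrier (g y).
Hypothesis fK : forall y, PS_carrier y -> f (g y) = y.
Hypothesis fM : forall x y, PS_carrier x -> PS_carrier y ->
  f (PS_mul x y) = PS_mul (f x) (f y).
Hypothesis fcont : PS_continuous f.

Definition pulled_parity (v : 'I_l -> bool) (x : PSel Fk) : bool :=
  char_l v (f x).

Definition parity_pullback (v : {ffun 'I_l -> bool}) : {ffun 'I_k -> bool} :=
  [ffun i => pulled_parity v (embed_k [:: (i, true)])].

Lemma pulled_parity_embed (v : {ffun 'I_l -> bool}) w : reducedb w ->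
  pulled_parity v (embed_k w) = parity (parity_pullback v) w.
Proof.
apply: (@free_char_parity k (fun u => pulled_parity v (embed_k u))) => u w' ru rw'.
have [uPS w'PS] := (@PS_embed_carrier Fk u ru, @PS_embed_carrier Fk w' rw').
rewrite /pulled_parity -[reduce _]/(@gmul Fk u w') PS_embed_mul ?fM //.
  exact: (PS_char_mul (free_group_laws l) (free_parityM v) (fPS uPS) (fPS w'PS)).
exact: free_group_laws.
Qed.

Lemma parity_pullback_inj : injective parity_pullback.
Proof.
move=> v w pull_vw; apply/ffunP => j.
pose e := @PS_embed Fl [:: (j, true)].
have ePS : PS_carrier e by apply: PS_embed_carrier.
have char_e (u : 'I_l -> bool) : char_l u e = u j.
  by rewrite (PS_char_embed (free_group_laws l) (free_parityM u)) // parity_cons addbF.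
pose Ns := [:: kernel_l v; kernel_l w].
have solNs N : List.In N Ns -> soluble_quotient N.
  move=> [<- | [<- | []]];
  exact: (char_kernel_soluble (free_group_laws l) (free_parityM _)).
have [h [rh agree_h]] := PS_continuous_approx (free_group_laws k) fcont (gPS ePS) solNs.
have char_h (u : {ffun 'I_l -> bool}) : List.In (kernel_l u) Ns ->
    char_l u (f (g e)) = parity (parity_pullback u) h.
  by move=> /agree_h E; rewrite -pulled_parity_embed // /pulled_parity /PS_char E.
rewrite -char_e -[RHS]char_e -(fK ePS) !char_h ?pull_vw //; [by right; left | by left].
Qed.

Lemma free_rank_le : l <= k.
Proof.
have := leq_card parity_pullback parity_pullback_inj.
by rewrite !card_ffun !card_bool !card_ord leq_exp2l.
Qed.

End RankBound.

Lemma PS_isomorphic_free_rank_le k l :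
  PS_isomorphic (free_group k) (free_group l) -> l <= k.
Proof.
by move=> [f [g [fPS [gPS [_ [fK [fM [fcont _]]]]]]]]; apply: free_rank_le fPS gPS fK fM fcont.
Qed.

Theorem mainTheorem7 (k l : nat) :
  2 <= k -> 2 <= l -> k <> l ->
  ~ PS_isomorphic (free_group k) (free_group l).
Proof.
move=> _ _ neq_kl iso; apply: neq_kl; apply/eqP; rewrite eqn_leq.
have iso' := PS_isomorphic_sym (free_group_laws k) iso.
by rewrite (PS_isomorphic_free_rank_le iso) (PS_isomorphic_free_rank_le iso').
Qed.
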